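(* Let $Z$ be a classical random variable on $\{0,1\}^m$ and $B$ a quantum system with joint state $\rho_{ZB}=\sum_z p_z|z\rangle\langle z|\otimes\rho^z_B$. If $\|\rho_{ZB}-\rho_{U_m}\otimes\rho_B\|_{\mathrm{tr}}>\epsilon$, then there exists $i\in[m]$ such that $$\Big\|\sum_{z:\,z_i=0}p_z\,|z_{[i-1]}\rangle\langle z_{[i-1]}|\otimes\rho^z_B-\sum_{z:\,z_i=1}p_z\,|z_{[i-1]}\rangle\langle z_{[i-1]}|\otimes\rho^z_B\Big\|_{\mathrm{tr}}>\frac{\epsilon}{m}.$$
   Context: $[N]=\{1,\dots,N\}$; $z_i$ is the $i$-th bit of $z$ and $z_{[i-1]}$ the string of its first $i-1$ bits (empty for $i=1$). $\|A\|_{\mathrm{tr}}=\mathrm{tr}\sqrt{A^\dagger A}$; $\rho_{U_m}=2^{-m}\mathbb{1}$ is the fully mixed state on $m$ qubits; $\rho^z_B$ are density operators and $(p_z)$ a probability distribution. *)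

From HB Require Import structures.
From mathcomp Require Import all_boot all_order all_algebra all_field.
From Stdlib Require Import ClassicalEpsilon.
Set Implicit Arguments. Unset Strict Implicit. Unset Printing Implicit Defensive.
Import Order.TTheory GRing.Theory Num.Theory.
Local Open Scope ring_scope.

Definition adjmx n (A : 'M[algC]_n) : 'M[algC]_n := (map_mx Num.conj A)^T.

Definition psdmx n (A : 'M[algC]_n) : Prop :=
  adjmx A = A /\ forall v : 'rV[algC]_n, 0 <= (v *m A *m (map_mx Num.conj v)^T) 0 0.

Definition density n (A : 'M[algC]_n) : Prop := psdmx A /\ \tr A = 1.

Definition sqrtmx n (M : 'M[algC]_n) : 'M[algC]_n :=
  match excluded_middle_informative (exists S : 'M[algC]_n, psdmx S /\ S *m S = M) with
  | left H => proj1_sig (constructive_indefinite_description _ H)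
  | right _ => 0
  end.

Definition trnorm n (A : 'M[algC]_n) : algC := \tr (sqrtmx (adjmx A *m A)).

(* operators on the Hilbert space with orthonormal basis indexed by a finType T *)
Definition op (T : finType) := 'M[algC]_#|T|.

Definition ketbra (T : finType) (z : T) : op T := delta_mx (enum_rank z) (enum_rank z).

Definition tens (T1 T2 : finType) (A : op T1) (B : op T2) : op (T1 * T2)%type :=
  \matrix_(i, j) (A (enum_rank (enum_val i).1) (enum_rank (enum_val j).1)
                  * B (enum_rank (enum_val i).2) (enum_rank (enum_val j).2)).

(* z_[i] : the first i bits of z (bits are 0-indexed: bit i of z is tnth z i) *)
Definition bitprefix m (z : m.-tuple bool) (i : 'I_m) : (val i).-tuple bool :=
  [tuple tnth z (widen_ord (ltnW (ltn_ord i)) j) | j < val i].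

Definition rhoU (m : nat) : op (m.-tuple bool) := ((2 ^ m)%:R)^-1 *: 1%:M.

(* The trace norm is dual to the operator norm: ||A||_tr is the maximum of
   Re tr(W A) over contractions W, and the maximum is attained.  Consequently
   ||.||_tr is subadditive, and ||A||_tr <= ||B||_tr as soon as every contraction
   paired with A can be traded for a contraction paired with B.

   Revealing the bits of Z one at a time telescopes rho_ZB - rho_U (x) rho_B into
   m terms; the i-th term is block diagonal in z, its block at z being
   +-2^-(m-i) times the diagonal block of X_i at z_[i-1], where X_i is the
   operator of the conclusion.  Averaging a contraction over the 2^(m-i) strings
   sharing a prefix gives again a contraction, so each term has trace norm at
   most ||X_i||_tr.  Hence the ||X_i||_tr sum to more than eps, and one of them
   exceeds eps/m. *)

From mathcomp Require Import all_boot all_order all_algebra all_field.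
From mathcomp Require Import sesquilinear spectral.
From Stdlib Require Import ClassicalEpsilon.
Import Order.TTheory GRing.Theory Num.Theory.
Set Implicit Arguments. Unset Strict Implicit. Unset Printing Implicit Defensive.
Local Open Scope ring_scope.
Local Open Scope sesquilinear_scope.

(** * Adjoints, row norms and contractions *)

Lemma trmxC_mul m n p (A : 'M[algC]_(m, n)) (B : 'M_(n, p)) :
  (A *m B)^t* = B^t* *m A^t*.
Proof. by rewrite trmx_mul map_mxM. Qed.

Lemma trmxC_diag n (d : 'rV[algC]_n) : (diag_mx d)^t* = diag_mx (map_mx Num.conj d).
Proof. by rewrite tr_diag_mx map_diag_mx. Qed.

Lemma adjmxE n (A : 'M[algC]_n) : adjmx A = A^t*.
Proof. by rewrite /adjmx map_trmx. Qed.

Lemma psdmxP n (S : 'M[algC]_n) :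
  psdmx S <-> S^t* = S /\ forall v : 'rV_n, 0 <= (v *m S *m v^t*) 0 0.
Proof.
rewrite /psdmx adjmxE; split=> -[hS qS]; split=> // v.
  by rewrite -map_trmx.
by rewrite map_trmx.
Qed.

Lemma diag_mxM n (a b : 'rV[algC]_n) :
  diag_mx a *m diag_mx b = diag_mx (\row_j (a 0 j * b 0 j)).
Proof. by apply/matrixP=> i j; rewrite mul_diag_mx !mxE mulrnAr. Qed.

Definition sqnorm n (v : 'rV[algC]_n) : algC := \sum_i `|v 0 i| ^+ 2.

Lemma sqnormE n (v : 'rV[algC]_n) : sqnorm v = (v *m v^t*) 0 0.
Proof. by rewrite /sqnorm mxE; apply: eq_bigr => i _; rewrite !mxE normCK. Qed.

Lemma sqnorm_ge0 n (v : 'rV[algC]_n) : 0 <= sqnorm v.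
Proof. by apply: sumr_ge0 => i _; rewrite exprn_ge0. Qed.

Lemma sqnorm_unitary n (Q : 'M[algC]_n) v :
  Q \is unitarymx -> sqnorm (v *m Q) = sqnorm v.
Proof. by move=> UQ; rewrite !sqnormE trmxC_mul mulmxA mulmxtVK. Qed.

Lemma sqnorm_delta n (k : 'I_n) : sqnorm (delta_mx 0 k : 'rV[algC]_n) = 1.
Proof.
rewrite /sqnorm (bigD1 k) //= big1 => [|j /negbTE jk]; rewrite !mxE ?eqxx ?jk /=.
  by rewrite normr1 expr1n addr0.
by rewrite normr0 expr0n.
Qed.

Definition contraction n (K : 'M[algC]_n) :=
  forall v : 'rV_n, sqnorm (v *m K) <= sqnorm v.

Lemma contraction_unitary_mull n (Q K : 'M[algC]_n) :
  Q \is unitarymx -> contraction K -> contraction (Q *m K).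
Proof.
by move=> UQ cK v; rewrite mulmxA; apply: le_trans (cK _) _; rewrite sqnorm_unitary.
Qed.

Lemma quadform_diag n (v : 'rV[algC]_n) d :
  (v *m diag_mx d *m v^t*) 0 0 = \sum_k d 0 k * `|v 0 k| ^+ 2.
Proof.
rewrite mul_mx_diag mxE; apply: eq_bigr => k _.
by rewrite !mxE normCK -!mulrA mulrCA.
Qed.

Lemma quadform_unitary_diag n (Q : 'M[algC]_n) (d : 'rV_n) (k : 'I_n) :
  Q \is unitarymx -> let v := (delta_mx 0 k : 'rV_n) *m Q in
  (v *m (Q^t* *m diag_mx d *m Q) *m v^t*) 0 0 = d 0 k.
Proof.
move=> UQ v; rewrite /v trmxC_mul !mulmxA !mulmxtVK // quadform_diag.
rewrite (bigD1 k) //= big1 => [|j /negbTE jk]; rewrite !mxE ?eqxx ?jk /=.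
  by rewrite normr1 expr1n mulr1 addr0.
by rewrite normr0 expr0n mulr0.
Qed.

Lemma hermitian_spectral n (S : 'M[algC]_n) : S^t* = S ->
  exists (Q : 'M[algC]_n) (d : 'rV_n), Q \is unitarymx /\ S = Q^t* *m diag_mx d *m Q.
Proof.
move=> hS; have nS : S \is normalmx by rewrite qualifE hS.
have /orthomx_spectralP eS := nS.
exists (spectralmx S), (spectral_diag S).
have UQ := spectral_unitarymx S.
by split; rewrite // {1}eS invmx_unitary.
Qed.

Lemma psdmx_spectral n (S : 'M[algC]_n) : psdmx S ->
  exists (Q : 'M[algC]_n) (d : 'rV_n),
    [/\ Q \is unitarymx, S = Q^t* *m diag_mx d *m Q & forall k, 0 <= d 0 k].
Proof.
move=> /psdmxP[hS qS]; have [Q [d [UQ eS]]] := hermitian_spectral hS.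
exists Q, d; split => // k.
by have := qS (delta_mx 0 k *m Q); rewrite {1}eS quadform_unitary_diag.
Qed.

Lemma psdmx_sqrt_exists n (A : 'M[algC]_n) :
  exists S, psdmx S /\ S *m S = A^t* *m A.
Proof.
have hM : (A^t* *m A)^t* = A^t* *m A by rewrite trmxC_mul trmxCK.
have [Q [e [UQ eM]]] := hermitian_spectral hM.
have e_ge0 k : 0 <= e 0 k.
  rewrite -(quadform_unitary_diag e k UQ) -eM mulmxA -(mulmxA _ A).
  by rewrite -{2}(trmxCK A) -trmxC_mul -sqnormE sqnorm_ge0.
pose s := \row_j sqrtC (e 0 j).
have s_conj : map_mx Num.conj s = s.
  by apply/matrixP => i j; rewrite !mxE geC0_conj // sqrtC_ge0.
exists (Q^t* *m diag_mx s *m Q); split; first (apply/psdmxP; split).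
- by rewrite !trmxC_mul trmxCK trmxC_diag s_conj mulmxA.
- move=> v; rewrite !mulmxA -(mulmxA _ Q) -{2}(trmxCK Q) -trmxC_mul quadform_diag.
  by apply: sumr_ge0 => k _; rewrite mulr_ge0 ?exprn_ge0 // mxE sqrtC_ge0.
rewrite !mulmxA mulmxtVK // -(mulmxA (Q^t*)) diag_mxM eM.
congr (_ *m diag_mx _ *m _); apply/matrixP => i j.
by rewrite !mxE -expr2 sqrtCK ord1.
Qed.

(** * Trace norm duality *)

Lemma sum_enum_rank (T : finType) (F : 'I_#|T| -> algC) :
  \sum_k F k = \sum_x F (enum_rank x).
Proof. by rewrite (reindex (@enum_rank T)) //; exact/onW_bij/enum_rank_bij. Qed.

Lemma CauchySchwarz_sum (I : finType) (P : pred I) (x y : I -> algC) :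
  `|\sum_(i | P i) x i * y i| ^+ 2
    <= (\sum_(i | P i) `|x i| ^+ 2) * \sum_(i | P i) `|y i| ^+ 2.
Proof.
pose row (f : I -> algC) : 'rV_#|I| := \row_k ((P (enum_val k))%:R * f (enum_val k)).
have dotE f g : dotmx (C := algC) (row f) (row g) = \sum_(i | P i) f i * (g i)^*.
  rewrite dotmxE mxE sum_enum_rank [RHS]big_mkcond; apply: eq_bigr => i _.
  rewrite /row !mxE enum_rankK.
  by case: (P i); rewrite ?mul1r ?mul0r ?conjC1 ?mulr1.
have normE f : dotmx (C := algC) (row f) (row f) = \sum_(i | P i) `|f i| ^+ 2.
  by rewrite dotE; apply: eq_bigr => i _; rewrite normCK.
pose y' := fun i => (y i)^*.
have CS : `|dotmx (C := algC) (row x) (row y')| ^+ 2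
    <= dotmx (row x) (row x) * dotmx (row y') (row y').
  exact: leif_le (CauchySchwarz (@dotmx algC #|I|) _ _).
have xy : \sum_(i | P i) x i * (y' i)^* = \sum_(i | P i) x i * y i.
  by apply: eq_bigr => i _; rewrite conjCK.
have yy : \sum_(i | P i) `|y' i| ^+ 2 = \sum_(i | P i) `|y i| ^+ 2.
  by apply: eq_bigr => i _; rewrite norm_conjC.
by rewrite !normE dotE xy yy in CS.
Qed.

Lemma psdmx_sqrt_spectral n (A S : 'M[algC]_n) :
  psdmx S -> S *m S = A^t* *m A ->
  exists (Q : 'M[algC]_n) (d : 'rV_n), [/\ Q \is unitarymx, S = Q^t* *m diag_mx d *m Q,
    forall k, 0 <= d 0 k & (A *m Q^t*)^t* *m (A *m Q^t*) = diag_mx d *m diag_mx d].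
Proof.
move=> pS SS; have [Q [d [UQ eS d_ge0]]] := psdmx_spectral pS.
exists Q, d; split => //.
rewrite trmxC_mul trmxCK !mulmxA -(mulmxA Q) -SS eS !mulmxA (unitarymxP UQ) mul1mx.
by rewrite !mulmxtVK.
Qed.

Lemma psdmx_sqrt_dual_le n (A S K : 'M[algC]_n) :
  psdmx S -> S *m S = A^t* *m A -> contraction K -> 'Re (\tr (K *m A)) <= \tr S.
Proof.
move=> pS SS cK; have [Q [d [UQ eS d_ge0 AA]]] := psdmx_sqrt_spectral pS SS.
set A' := A *m Q^t* in AA; pose K' := Q *m K.
have trKA : \tr (K *m A) = \tr (K' *m A').
  by rewrite /K' /A' [RHS]mxtrace_mulC !mulmxA mulmxKtV // mxtrace_mulC.
have trS : \tr S = \sum_k d 0 k.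
  by rewrite eS mxtrace_mulC mulmxA (unitarymxP UQ) mul1mx mxtrace_diag.
have col k : \sum_j `|A' j k| ^+ 2 = d 0 k ^+ 2.
  have := congr1 (fun M : 'M[algC]_n => M k k) AA.
  rewrite /= diag_mxM !mxE eqxx mulr1n -expr2 => <-.
  by apply: eq_bigr => j _; rewrite !mxE normCKC.
have row k : \sum_j `|K' k j| ^+ 2 <= 1.
  have := contraction_unitary_mull UQ cK (delta_mx 0 k).
  rewrite sqnorm_delta /sqnorm.
  by under eq_bigr do rewrite -rowE mxE.
rewrite trKA trS raddf_sum /=; apply: ler_sum => k _.
apply: le_trans (leif_le (leif_Re_Creal _)) _.
rewrite mxE -ler_sqr ?nnegrE //.
apply: le_trans (CauchySchwarz_sum xpredT (fun j => K' k j) (fun j => A' j k)) _.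
by rewrite col ler_piMl ?exprn_ge0.
Qed.

Lemma psdmx_sqrt_dual_attained n (A S : 'M[algC]_n) :
  psdmx S -> S *m S = A^t* *m A ->
  exists2 W : 'M[algC]_n, contraction W & \tr (W *m A) = \tr S.
Proof.
move=> pS SS; have [Q [d [UQ eS d_ge0 AA]]] := psdmx_sqrt_spectral pS SS.
set A' := A *m Q^t* in AA.
pose dinv := \row_j (d 0 j)^-1.
have dinv_conj : (diag_mx dinv)^t* = diag_mx dinv.
  rewrite trmxC_diag; congr diag_mx; apply/matrixP => i j.
  by rewrite !mxE geC0_conj // invr_ge0.
pose W' := diag_mx dinv *m A'^t*.
have WW : W' *m W'^t* = diag_mx (\row_k ((d 0 k != 0)%:R : algC)).
  rewrite trmxC_mul trmxCK dinv_conj mulmxA -(mulmxA (diag_mx dinv)) AA !diag_mxM.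
  congr diag_mx; apply/matrixP => i k; rewrite !mxE.
  have [->|dk] := eqVneq (d 0 k) 0; first by rewrite !mulr0 mul0r.
  by rewrite mulrA mulVf // mul1r mulfV.
exists (Q^t* *m W').
  move=> v; rewrite mulmxA -(sqnorm_unitary v (_ : Q^t* \is unitarymx)); last first.
    by rewrite trmxC_unitary.
  set u := v *m Q^t*.
  rewrite sqnormE trmxC_mul mulmxA -(mulmxA u) WW quadform_diag.
  apply: ler_sum => k _; rewrite mxE.
  by case: (d 0 k != 0); rewrite ?mul1r // mul0r exprn_ge0.
rewrite mxtrace_mulC mulmxA -/A' mxtrace_mulC -mulmxA AA !diag_mxM mxtrace_diag.
rewrite eS mxtrace_mulC mulmxA (unitarymxP UQ) mul1mx mxtrace_diag.
apply: eq_bigr => k _; rewrite !mxE.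
have [->|dk] := eqVneq (d 0 k) 0; first by rewrite !mulr0.
by rewrite mulrA mulVf // mul1r.
Qed.

Lemma sqrtmx_spec n (A : 'M[algC]_n) :
  psdmx (sqrtmx (adjmx A *m A)) /\
  sqrtmx (adjmx A *m A) *m sqrtmx (adjmx A *m A) = A^t* *m A.
Proof.
rewrite /sqrtmx adjmxE; case: excluded_middle_informative => [H|[]].
  by case: constructive_indefinite_description.
exact: psdmx_sqrt_exists.
Qed.

Lemma trnorm_dual_le n (A K : 'M[algC]_n) :
  contraction K -> 'Re (\tr (K *m A)) <= trnorm A.
Proof. by have [pS SS] := sqrtmx_spec A; exact: psdmx_sqrt_dual_le. Qed.

Lemma trnorm_dual_attained n (A : 'M[algC]_n) :
  exists2 W : 'M[algC]_n, contraction W & \tr (W *m A) = trnorm A.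
Proof. by have [pS SS] := sqrtmx_spec A; exact: psdmx_sqrt_dual_attained. Qed.

Lemma trnorm_ge0 n (A : 'M[algC]_n) : 0 <= trnorm A.
Proof.
have c0 : contraction (0 : 'M[algC]_n).
  by move=> v; rewrite mulmx0 {1}/sqnorm big1 ?sqnorm_ge0 // => i _; rewrite mxE normr0 expr0n.
by have := trnorm_dual_le A c0; rewrite mul0mx mxtrace0 raddf0.
Qed.

Lemma trnormE_Re n (A : 'M[algC]_n) : 'Re (trnorm A) = trnorm A.
Proof. exact/Creal_ReP/ger0_real/trnorm_ge0. Qed.

Lemma trnorm_sum_le n (I : finType) (A : I -> 'M[algC]_n) :
  trnorm (\sum_i A i) <= \sum_i trnorm (A i).
Proof.
rewrite -trnormE_Re; have [W cW <-] := trnorm_dual_attained (\sum_i A i).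
rewrite mulmx_sumr (raddf_sum (@mxtrace _ n)) raddf_sum /=.
by apply: ler_sum => i _; exact: trnorm_dual_le.
Qed.

Lemma trnorm_le_dual n m (A : 'M[algC]_n) (B : 'M[algC]_m) :
  (forall W, contraction W -> exists2 K, contraction K & \tr (W *m A) = \tr (K *m B)) ->
  trnorm A <= trnorm B.
Proof.
move=> dual; have [W cW trW] := trnorm_dual_attained A; have [K cK trK] := dual W cW.
by rewrite -trnormE_Re -trW trK trnorm_dual_le.
Qed.

(** * Operators on finite-type indexed spaces and block lifting *)

Lemma sum_pair (T1 T2 : finType) (F : T1 * T2 -> algC) :
  \sum_u F u = \sum_x \sum_y F (x, y).
Proof. by rewrite pair_bigA; apply: eq_bigr => -[]. Qed.

Lemma sum_pick (T : finType) (a : T) (F : T -> algC) : \sum_x (x == a)%:R * F x = F a.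
Proof. by rewrite (bigD1 a) //= eqxx mul1r big1 ?addr0 // => x /negbTE->; rewrite mul0r. Qed.

Lemma sum_pick2 (T1 T2 : finType) (a : T1) (F : T1 -> T2 -> algC) :
  \sum_x \sum_y (x == a)%:R * F x y = \sum_y F a y.
Proof. by under eq_bigr do rewrite -mulr_sumr; rewrite sum_pick. Qed.

Definition entry (T : finType) (A : op T) (x y : T) : algC := A (enum_rank x) (enum_rank y).

Definition op_of_fun (T : finType) (f : T -> T -> algC) : op T :=
  \matrix_(i, j) f (enum_val i) (enum_val j).

Lemma entry_op_of_fun (T : finType) (f : T -> T -> algC) x y :
  entry (op_of_fun f) x y = f x y.
Proof. by rewrite /entry mxE !enum_rankK. Qed.

Lemma entryP (T : finType) (A B : op T) :
  (forall x y, entry A x y = entry B x y) -> A = B.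
Proof.
move=> eqAB; apply/matrixP => i j.
by have := eqAB (enum_val i) (enum_val j); rewrite /entry !enum_valK.
Qed.

Lemma entryB (T : finType) (A B : op T) x y : entry (A - B) x y = entry A x y - entry B x y.
Proof. by rewrite /entry !mxE. Qed.

Lemma entryZ (T : finType) c (A : op T) x y : entry (c *: A) x y = c * entry A x y.
Proof. by rewrite /entry mxE. Qed.

Lemma entry_sum (T I : finType) (P : pred I) (F : I -> op T) x y :
  entry (\sum_(i | P i) F i) x y = \sum_(i | P i) entry (F i) x y.
Proof. by rewrite /entry summxE. Qed.

Lemma entry_tens (T1 T2 : finType) (A : op T1) (B : op T2) x1 x2 y1 y2 :
  entry (tens A B) (x1, x2) (y1, y2) = entry A x1 y1 * entry B x2 y2.
Proof. by rewrite /entry /tens mxE !enum_rankK. Qed.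

Lemma entry_ketbra (T : finType) (z x y : T) :
  entry (ketbra z) x y = ((x == z) && (y == z))%:R.
Proof. by rewrite /entry /ketbra mxE !(inj_eq enum_rank_inj). Qed.

Lemma entry_rhoU m (x y : m.-tuple bool) :
  entry (rhoU m) x y = ((2 ^ m)%:R)^-1 * (x == y)%:R.
Proof. by rewrite /entry /rhoU !mxE (inj_eq enum_rank_inj). Qed.

Lemma mxtrace_mul_entry (T : finType) (A B : op T) :
  \tr (A *m B) = \sum_x \sum_y entry A x y * entry B y x.
Proof.
by rewrite /mxtrace sum_enum_rank; apply: eq_bigr => x _; rewrite mxE sum_enum_rank.
Qed.

Lemma sqnorm_entry (T : finType) (u : 'rV[algC]_#|T|) :
  sqnorm u = \sum_x `|u 0 (enum_rank x)| ^+ 2.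
Proof. exact: sum_enum_rank. Qed.

Lemma mulmx_entry (T : finType) (u : 'rV[algC]_#|T|) (M : op T) y :
  (u *m M) 0 (enum_rank y) = \sum_x u 0 (enum_rank x) * entry M x y.
Proof. by rewrite mxE sum_enum_rank. Qed.

Lemma contraction_block (A D : finType) (W : op (A * D)%type) (a : A) (f : D -> algC) :
  contraction W ->
  \sum_e' `|\sum_e f e * entry W (a, e) (a, e')| ^+ 2 <= \sum_e `|f e| ^+ 2.
Proof.
move=> cW; pose u : 'rV_#|{: (A * D)%type}| :=
  \row_k (((enum_val k).1 == a)%:R * f (enum_val k).2).
have uE a' e : u 0 (enum_rank (a', e)) = (a' == a)%:R * f e by rewrite mxE enum_rankK.
have nu : sqnorm u = \sum_e `|f e| ^+ 2.
  rewrite sqnorm_entry sum_pair (bigD1 a) //= [X in _ + X]big1 => [|a' a'a].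
    by rewrite addr0; apply: eq_bigr => e _; rewrite uE eqxx mul1r.
  by apply: big1 => e _; rewrite uE (negbTE a'a) mul0r normr0 expr0n.
rewrite -nu; apply: le_trans (cW u); rewrite sqnorm_entry sum_pair (bigD1 a) //=.
rewrite -[X in X <= _]addr0 lerD ?sumr_ge0 // => [|a' _]; last first.
  by apply: sumr_ge0 => e _; rewrite exprn_ge0.
apply: ler_sum => e' _; rewrite mulmx_entry sum_pair (bigD1 a) //= [X in _ + X]big1 ?addr0.
  rewrite [X in _ <= `|X| ^+ 2](eq_bigr (fun e => f e * entry W (a, e) (a, e'))) //.
  by move=> e _; rewrite uE eqxx mul1r.
by move=> a' a'a; apply: big1 => e _; rewrite uE (negbTE a'a) !mul0r.
Qed.

Section BlockLift.
Variables (A B D : finType) (pre : A -> B) (s : A -> algC).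

Definition lift (X : op (B * D)%type) : op (A * D)%type :=
  op_of_fun (fun u v => (u.1 == v.1)%:R * (s u.1 * entry X (pre u.1, u.2) (pre u.1, v.2))).

Definition lift_dual (W : op (A * D)%type) : op (B * D)%type :=
  op_of_fun (fun u v => (u.1 == v.1)%:R *
    \sum_(a | pre a == u.1) s a * entry W (a, u.2) (a, v.2)).

Lemma entry_lift X u v :
  entry (lift X) u v = (u.1 == v.1)%:R * (s u.1 * entry X (pre u.1, u.2) (pre u.1, v.2)).
Proof. exact: entry_op_of_fun. Qed.

Lemma mxtrace_mul_lift W X : \tr (W *m lift X) = \tr (lift_dual W *m X).
Proof.
rewrite !mxtrace_mul_entry !sum_pair.
under eq_bigr do under eq_bigr do rewrite sum_pair.
under [RHS]eq_bigr do under eq_bigr do rewrite sum_pair.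
under eq_bigr do under eq_bigr do under eq_bigr do under eq_bigr do
  rewrite entry_lift /= mulrCA.
under [RHS]eq_bigr do under eq_bigr do under eq_bigr do under eq_bigr do
  rewrite entry_op_of_fun /= eq_sym -mulrA.
under eq_bigr do under eq_bigr do rewrite sum_pick2.
under [RHS]eq_bigr do under eq_bigr do rewrite sum_pick2.
rewrite (partition_big pre xpredT) //=; apply: eq_bigr => b _.
rewrite exchange_big /=; apply: eq_bigr => e _.
rewrite exchange_big /=; apply: eq_bigr => e' _.
rewrite mulr_suml; apply: eq_bigr => a /eqP <-.
by rewrite mulrCA mulrA.
Qed.

Variable N : nat.
Hypotheses (N_gt0 : (0 < N)%N) (card_fibre_le : forall b, (#|[pred a | pre a == b]| <= N)%N)
  (norm_s_le : forall a, `|s a| <= N%:R^-1).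

Lemma lift_dual_contraction W : contraction W -> contraction (lift_dual W).
Proof.
move=> cW u; set c : algC := N%:R^-1.
have c_ge0 : 0 <= c by rewrite invr_ge0 ler0n.
have cN : c * N%:R = 1 by rewrite mulVf // pnatr_eq0 -lt0n.
have sum_fibre (F : A -> algC) : \sum_a F a = \sum_b \sum_(a | pre a == b) F a.
  exact: partition_big.
pose U b e := u 0 (enum_rank (b, e)).
pose t a e' := \sum_e U (pre a) e * entry W (a, e) (a, e').
have uK b' e' : (u *m lift_dual W) 0 (enum_rank (b', e')) =
    \sum_(a | pre a == b') s a * t a e'.
  rewrite mulmx_entry sum_pair.
  under eq_bigr do under eq_bigr do rewrite entry_op_of_fun /= mulrCA.
  rewrite sum_pick2; under eq_bigr do rewrite mulr_sumr.
  rewrite exchange_big /=; apply: eq_bigr => a /eqP <-.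
  by rewrite /t mulr_sumr; apply: eq_bigr => e _; rewrite mulrCA.
have fibre_sqr b : \sum_(a | pre a == b) `|s a| ^+ 2 <= c.
  apply: le_trans (_ : \sum_(a | pre a == b) c ^+ 2 <= c).
    by apply: ler_sum => a _; rewrite lerXn2r ?nnegrE.
  rewrite sumr_const expr2 -mulr_natl mulrA -[X in _ <= X]mul1r ler_wpM2r //.
  by rewrite -[X in _ <= X]cN mulrC ler_wpM2l // ler_nat; exact: card_fibre_le.
rewrite sqnorm_entry sum_pair.
apply: le_trans (_ : _ <= c * \sum_a \sum_e' `|t a e'| ^+ 2) _.
  rewrite sum_fibre mulr_sumr; apply: ler_sum => b _.
  rewrite exchange_big mulr_sumr /=; apply: ler_sum => e' _; rewrite uK.
  apply: le_trans (CauchySchwarz_sum _ _ _) _.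
  by rewrite ler_wpM2r ?sumr_ge0 // => a _; rewrite exprn_ge0.
apply: le_trans (_ : _ <= c * \sum_a \sum_e `|U (pre a) e| ^+ 2) _.
  by rewrite ler_wpM2l //; apply: ler_sum => a _; exact: contraction_block.
rewrite sqnorm_entry sum_pair sum_fibre mulr_sumr; apply: ler_sum => b _.
rewrite (eq_bigr (fun _ => \sum_e `|U b e| ^+ 2)) => [|a /eqP -> //].
rewrite sumr_const -mulr_natl mulrA -[X in _ <= X]mul1r ler_wpM2r ?sumr_ge0 //.
  by move=> e _; rewrite exprn_ge0.
by rewrite -[X in _ <= X]cN ler_wpM2l // ler_nat; exact: card_fibre_le.
Qed.

Lemma trnorm_lift X : trnorm (lift X) <= trnorm X.
Proof.
apply: trnorm_le_dual => W cW; exists (lift_dual W).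
  exact: lift_dual_contraction.
exact: mxtrace_mul_lift.
Qed.

End BlockLift.

(** * Bit prefixes and the telescoping identity *)

Definition agree m (k : nat) (z w : m.-tuple bool) :=
  [forall j : 'I_m, (j < k)%N ==> (tnth z j == tnth w j)].

Lemma agree0 m (z w : m.-tuple bool) : agree 0 z w.
Proof. exact/forallP. Qed.

Lemma agree_full m (z w : m.-tuple bool) : agree m z w = (z == w).
Proof.
apply/idP/eqP => [/forallP agr|->]; last by apply/forallP => j; rewrite eqxx implybT.
by apply: eq_from_tnth => j; have := agr j; rewrite ltn_ord => /eqP.
Qed.

Lemma agreeS m (i : 'I_m) (z w : m.-tuple bool) :
  agree i.+1 z w = agree i z w && (tnth z i == tnth w i).
Proof.
apply/idP/andP => [/forallP agr|[/forallP agr zw]].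
  split; last by have := agr i; rewrite ltnSn.
  by apply/forallP => j; apply/implyP => ji; have := agr j; rewrite ltnS ltnW.
apply/forallP => j; apply/implyP; rewrite ltnS leq_eqVlt => /orP[/eqP ji|ji].
  by have -> : j = i by apply: val_inj.
by have := agr j; rewrite ji.
Qed.

Lemma agree_bitprefix m (i : 'I_m) (z w : m.-tuple bool) :
  agree i z w = (bitprefix z i == bitprefix w i).
Proof.
apply/forallP/eqP => [agr|eq_pre j].
  apply: eq_from_tnth => j; rewrite !tnth_mktuple.
  by have := agr (widen_ord (ltnW (ltn_ord i)) j); rewrite /= ltn_ord => /eqP.
apply/implyP => ji; have := congr1 (fun t => tnth t (Ordinal ji)) eq_pre.
rewrite !tnth_mktuple.
have -> : widen_ord (ltnW (ltn_ord i)) (Ordinal ji) = j by apply: val_inj.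
by move=> ->.
Qed.

Lemma card_bitprefix_fibre m (i : 'I_m) (v : i.-tuple bool) :
  (#|[pred w : m.-tuple bool | bitprefix w i == v]| <= 2 ^ (m - i))%N.
Proof.
have sidx (j : 'I_(m - i)) : (i + j < m)%N by rewrite -ltn_subRL.
pose suffix (w : m.-tuple bool) := [tuple tnth w (Ordinal (sidx j)) | j < m - i].
set J := [pred w : m.-tuple bool | bitprefix w i == v].
have inj : {in J &, injective suffix}.
  move=> w w' /eqP hw /eqP hw' hs; apply: eq_from_tnth => l.
  have [li|il] := ltnP l i.
    have : agree i w w' by rewrite agree_bitprefix hw hw'.
    by move/forallP/(_ l); rewrite li => /eqP.
  have lj : (l - i < m - i)%N by rewrite ltn_sub2r // (leq_ltn_trans il).
  have := congr1 (fun t => tnth t (Ordinal lj)) hs; rewrite !tnth_mktuple.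
  by have -> : Ordinal (sidx (Ordinal lj)) = l by apply: val_inj; rewrite /= subnKC.
rewrite -(card_in_imset inj); apply: leq_trans (max_card _) _.
by rewrite card_tuple card_bool.
Qed.

(* The diagonal entry of the fully mixed state on the last m - k bits. *)
Definition unif_weight (m k : nat) : algC := ((2 ^ (m - k))%N%:R)^-1.

Lemma unif_weightS m (i : 'I_m) : unif_weight m i.+1 = unif_weight m i *+ 2.
Proof.
have e : (2 ^ (m - i))%N%:R = 2 * (2 ^ (m - i.+1))%N%:R :> algC.
  by rewrite -natrM -expnS subnSK.
have half2 : (2^-1 : algC) *+ 2 = 1 by rewrite mulr2n [RHS](splitr 1) mul1r.
by rewrite /unif_weight e invfM -mulrnAl half2 mul1r.
Qed.

Definition bias m (i : 'I_m) (g : m.-tuple bool -> algC) (v : i.-tuple bool) : algC :=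
  \sum_(z | bitprefix z i == v) (-1) ^+ tnth z i * g z.
Arguments bias {m} i g v.

Lemma bitwise_telescope m (g : m.-tuple bool -> algC) (w : m.-tuple bool) :
  g w - unif_weight m 0 * \sum_z g z
  = \sum_(i < m) unif_weight m i * (-1) ^+ tnth w i * bias i g (bitprefix w i).
Proof.
(* [M k] is the [w] entry of the state that keeps the first k bits of z and
   replaces the others by uniform bits. *)
pose M k := unif_weight m k * \sum_(z | agree k z w) g z.
have Mm : M m = g w.
  rewrite /M /unif_weight subnn expn0 invr1 mul1r.
  by rewrite (eq_bigl (pred1 w)) ?big_pred1_eq // => z; rewrite agree_full.
have M0 : M 0%N = unif_weight m 0 * \sum_z g z.
  by rewrite /M; congr (_ * _); apply: eq_bigl => z; rewrite agree0.
rewrite -Mm -M0 -(telescope_sumr M (leq0n m)) big_mkord; apply: eq_bigr => i _.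
rewrite /M unif_weightS -mulrA.
rewrite (eq_bigl (fun z => agree i z w && (tnth z i == tnth w i))) => [|z]; last first.
  exact: agreeS.
rewrite [X in _ - _ * X](bigID (fun z => tnth z i == tnth w i)) /=.
set E := \sum_(z | _ && (tnth z i == _)) g z; set F := \sum_(z | _ && (tnth z i != _)) g z.
have -> : (-1) ^+ tnth w i * bias i g (bitprefix w i) = E - F.
  rewrite /bias mulr_sumr (eq_bigl (fun z => agree i z w)) => [|z]; last first.
    by rewrite agree_bitprefix.
  rewrite (bigID (fun z => tnth z i == tnth w i)) /=; congr (_ + _).
    by apply: eq_bigr => z /andP[_ /eqP->]; rewrite mulrA -expr2 sqrr_sign mul1r.
  rewrite -sumrN; apply: eq_bigr => z /andP[_ neq].
  by rewrite mulrA -signr_addb; case: (tnth w i) (tnth z i) neq => -[]; rewrite ?mulN1r.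
by rewrite mulr2n mulrDl mulrDr opprD addrACA subrr add0r mulrBr.
Qed.

Definition bias_op m d (p : m.-tuple bool -> algC) (rho : m.-tuple bool -> op 'I_d)
    (i : 'I_m) : op (i.-tuple bool * 'I_d)%type :=
  (\sum_(z | tnth z i == false) p z *: tens (ketbra (bitprefix z i)) (rho z))
  - (\sum_(z | tnth z i == true) p z *: tens (ketbra (bitprefix z i)) (rho z)).

Lemma entry_bias_op m d p rho (i : 'I_m) (v : i.-tuple bool) (x x' : 'I_d) :
  entry (bias_op p rho i) (v, x) (v, x') = bias i (fun z => p z * entry (rho z) x x') v.
Proof.
rewrite entryB !entry_sum /bias [X in X - _]big_mkcond [X in _ - X]big_mkcond.
rewrite [RHS]big_mkcond -sumrB; apply: eq_bigr => z _.
rewrite entryZ entry_tens entry_ketbra andbb (eq_sym (bitprefix z i)).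
by case: (tnth z i); case: (v == _); rewrite /= ?mul0r ?mulr0 ?subr0 ?sub0r ?mul1r ?mulN1r.
Qed.

Lemma cq_state_telescope m d (p : m.-tuple bool -> algC) (rho : m.-tuple bool -> op 'I_d) :
  (\sum_z p z *: tens (ketbra z) (rho z)) - tens (rhoU m) (\sum_z p z *: rho z)
  = \sum_(i < m) lift (fun z => bitprefix z i) (fun z => unif_weight m i * (-1) ^+ tnth z i)
                      (bias_op p rho i).
Proof.
apply: entryP => -[w x] -[w' x']; set g := fun z => p z * entry (rho z) x x'.
rewrite entry_sum; under [RHS]eq_bigr do rewrite entry_lift /= entry_bias_op -/g.
rewrite -mulr_sumr -bitwise_telescope entryB entry_sum entry_tens entry_rhoU entry_sum.
under eq_bigr do rewrite entryZ entry_tens entry_ketbra.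
under [X in _ - _ * X]eq_bigr do rewrite entryZ.
rewrite mulrBr /unif_weight subn0; congr (_ - _); last first.
  by rewrite [_ * _%:R]mulrC -mulrA.
have [<-|neq] := eqVneq w w'.
  rewrite mul1r (bigD1 w) //= eqxx mul1r big1 ?addr0 // => z /negbTE zw.
  by rewrite eq_sym zw mul0r mulr0.
rewrite mul0r big1 // => z _.
have -> : (w == z) && (w' == z) = false.
  by apply: contraNF neq => /andP[/eqP-> /eqP->].
by rewrite mul0r mulr0.
Qed.

Lemma exists_gt_mean m (a : 'I_m -> algC) (eps : algC) :
  0 <= eps -> (forall i, 0 <= a i) -> eps < \sum_i a i -> exists i, eps / m%:R < a i.
Proof.
move=> eps_ge0 a_ge0 lt_sum.
have [/existsP[i lt_i] | /existsPn le_all] := boolP [exists i, eps / m%:R < a i].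
  by exists i.
have le_sum : \sum_i a i <= eps.
  apply: le_trans (_ : \sum_(i < m) eps / m%:R <= eps).
    apply: ler_sum => i _; rewrite real_leNgt ?le_all ?ger0_real //.
    by rewrite divr_ge0 ?ler0n.
  rewrite sumr_const card_ord; have [-> // | m_gt0] := posnP m.
  by rewrite -mulrnAr -mulr_natr mulVf ?mulr1 // pnatr_eq0 -lt0n.
by have := lt_le_trans lt_sum le_sum; rewrite ltxx.
Qed.

Theorem mainTheorem12 (m d : nat) (p : m.-tuple bool -> algC)
    (rho : m.-tuple bool -> op 'I_d) (eps : algC) :
  (forall z, 0 <= p z) -> \sum_z p z = 1 ->
  (forall z, density (rho z)) ->
  0 <= eps ->
  trnorm ((\sum_z p z *: tens (ketbra z) (rho z))
          - tens (rhoU m) (\sum_z p z *: rho z)) > eps ->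
  exists i : 'I_m,
    trnorm ((\sum_(z | tnth z i == false) p z *: tens (ketbra (bitprefix z i)) (rho z))
            - (\sum_(z | tnth z i == true) p z *: tens (ketbra (bitprefix z i)) (rho z)))
    > eps / m%:R.
Proof.
move=> _ _ _ eps_ge0 lt_eps.
apply: (@exists_gt_mean m (fun i => trnorm (bias_op p rho i))) => // [i|].
  exact: trnorm_ge0.
apply: (lt_le_trans lt_eps); rewrite cq_state_telescope.
apply: le_trans (trnorm_sum_le _) _; apply: ler_sum => i _.
apply: (@trnorm_lift _ _ _ _ _ (2 ^ (m - i))) => [||z]; first by rewrite expn_gt0.
  exact: card_bitprefix_fibre.
by rewrite normrM normr_sign mulr1 ger0_norm // invr_ge0 ler0n.
Qed.
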